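(* Let $\alpha\ge 0$ and $p>1$, set $\beta=\frac{\alpha+2}{p+1}$, and let $n$ be a positive integer with $\beta(\beta+n-2)>0$. Let $w$ be the solution of \[ w''+\frac{n-1}{t}w'=\frac{t^{\alpha}}{w^p},\qquad w(0)=1,\quad w'(0)=0, \] and let $w_0(t)=c_0t^{\beta}$ with $c_0=\bigl[\beta(\beta+n-2)\bigr]^{-1/(p+1)}$. If $w$ and $w_0$ intersect infinitely many times on $(0,\infty)$, then the solution curve of the MEMS problem makes infinitely many turns, i.e. $\lambda(t)=t^{\alpha+2}/w(t)^{p+1}$ has $\lambda'(t)$ changing sign infinitely many times on $(0,\infty)$.
   Context: The MEMS problem is \[ u''+\frac{n-1}{r}u'+\lambda\frac{r^{\alpha}}{(1-u)^p}=0\quad(0<r<1),\qquad u'(0)=u(1)=0,\qquad 0<u<1. \] The solution $w$ is positive and increasing and is defined for all $t>0$. The function $w_0$ solves the same differential equation as $w$. The solution curve is $t\mapsto(\lambda,u(0))=(t^{\alpha+2}/w(t)^{p+1},\,1-1/w(t))$, $t\in(0,\infty)$, with $u(r)=1-w(tr)/w(t)$ the solution at $\lambda(t)$. A turn is a sign change of $\lambda'(t)$. *)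

From Stdlib Require Import Reals.
From Coquelicot Require Import Coquelicot.
Open Scope R_scope.

Definition is_mems_solution (alpha p : R) (n : nat) (w : R -> R) : Prop :=
  w 0 = 1 /\
  filterlim (fun h => (w h - w 0) / h) (at_right 0) (locally 0) /\
  (forall t, 0 <= t -> 0 < w t) /\
  (forall t, 0 < t ->
     ex_derive w t /\ ex_derive (Derive w) t /\
     Derive (Derive w) t + (INR n - 1) / t * Derive w t
       = Rpower t alpha / Rpower (w t) p).

(* the set {t > 0 | f t = g t} is infinite *)
Definition intersect_infinitely (f g : R -> R) : Prop :=
  ~ (exists l : list R, forall t, 0 < t -> f t = g t -> List.In t l).

Definition changes_sign_infinitely (f : R -> R) : Prop :=
  forall k : nat, exists s : nat -> R,
    0 < s O /\
    forall i, (i < k)%nat -> s i < s (S i) /\ f (s i) * f (s (S i)) < 0.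

Definition beta_of (alpha p : R) : R := (alpha + 2) / (p + 1).

Definition c0_of (alpha p : R) (n : nat) : R :=
  Rpower (beta_of alpha p * (beta_of alpha p + INR n - 2)) (- (1 / (p + 1))).

Definition w0_of (alpha p : R) (n : nat) (t : R) : R :=
  c0_of alpha p n * Rpower t (beta_of alpha p).

Definition lambda_of (alpha p : R) (w : R -> R) (t : R) : R :=
  Rpower t (alpha + 2) / Rpower (w t) (p + 1).

From Stdlib Require Import Reals Lra Lia Classical IndefiniteDescription List.
From Coquelicot Require Import Coquelicot.
Open Scope R_scope.

(* Since [w0^(p+1) = t^(alpha+2) / B] with [B = beta (beta + n - 2)], the curve [lambda]
   equals [B] exactly at the intersections of [w] and [w0].  As [w0] solves the same
   equation, backward uniqueness for the ODE shows that [w] and [w0] cannot agree on a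
   whole interval: the agreement would propagate down to [0+], where [w] tends to [1]
   and [w0] to [0].  So between two consecutive intersections [lambda - B] vanishes at
   the ends but not identically, and by the mean value theorem [lambda'] takes both
   signs there; picking alternately a positive and a negative value on successive
   intervals yields arbitrarily many sign changes. *)

(** * Real analysis *)

Lemma Rpower_gt0 x y : 0 < Rpower x y.
Proof. apply exp_pos. Qed.

Lemma Rpower_opp_le x y q : 0 <= q -> 0 < x <= y -> Rpower y (- q) <= Rpower x (- q).
Proof.
  intros Hq Hxy. rewrite !Rpower_Ropp.
  apply Rinv_le_contravar; [apply Rpower_gt0 | apply Rle_Rpower_l; lra].
Qed.

Lemma Rpower_base_inj x y z :
  0 < x -> 0 < y -> z <> 0 -> Rpower x z = Rpower y z -> x = y.
Proof.
  intros Hx Hy Hz Heq. apply exp_inv in Heq.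
  apply ln_inv; [exact Hx | exact Hy | apply (Rmult_eq_reg_l z); assumption].
Qed.

Lemma filterlim_Rpower_at_right_0 b :
  0 < b -> filterlim (fun h => Rpower h b) (at_right 0) (locally 0).
Proof.
  intros Hb. unfold Rpower.
  apply (filterlim_comp _ _ _ (fun h => b * ln h) exp _ (Rbar_locally m_infty));
    [|exact is_lim_exp_m].
  apply (filterlim_comp _ _ _ ln (Rmult b) _ (Rbar_locally m_infty)); [exact is_lim_ln_0|].
  rewrite <- (is_Rbar_mult_unique b m_infty m_infty) at 2.
  - apply filterlim_Rbar_mult_l.
  - apply is_Rbar_mult_sym, is_Rbar_mult_m_infty_pos. exact Hb.
Qed.

Lemma filterlim_at_right_of_slope (f : R -> R) x l :
  filterlim (fun h => (f h - f x) / (h - x)) (at_right x) (locally l) ->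
  filterlim f (at_right x) (locally (f x)).
Proof.
  intros Hslope.
  apply (filterlim_ext_loc (fun h => f x + (h - x) * ((f h - f x) / (h - x)))).
  { exists (mkposreal 1 Rlt_0_1). intros h _ Hh. field. lra. }
  enough (H : filterlim (fun h => f x + (h - x) * ((f h - f x) / (h - x)))
                (at_right x) (locally (f x + 0 * l)))
    by (rewrite Rmult_0_l, Rplus_0_r in H; exact H).
  apply (filterlim_comp_2 (G := locally 0) (H := locally l)
           (fun h => h - x) _ (fun a b => f x + a * b)); [| exact Hslope |].
  - apply (filterlim_filter_le_1 (F := locally x)); [apply filter_le_within|].
    rewrite <- (Rminus_diag x). apply (continuity_pt_filterlim (fun h => h - x) x). reg.
  - apply (filterlim_comp _ _ _ (fun z => fst z * snd z) (fun y => f x + y) _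
             (Rbar_locally (Finite (0 * l)))).
    + exact (filterlim_Rbar_mult 0 l _ (eq_refl _)).
    + apply (continuity_pt_filterlim (fun y => f x + y)). reg.
Qed.

Lemma continuous_eq0_of_eq0_right (f : R -> R) x eta :
  continuous f x -> 0 < eta -> (forall t, x < t < x + eta -> f t = 0) -> f x = 0.
Proof.
  intros Hc Heta Hz.
  apply (filterlim_locally_unique (F := at_right x) f).
  - apply (filterlim_filter_le_1 (F := locally x)); [apply filter_le_within | exact Hc].
  - apply (filterlim_ext_loc (fun _ => 0)); [|apply filterlim_const].
    apply (locally_interval _ x (x - eta) (x + eta)); simpl; try lra.
    intros t Ht1 Ht2 Hxt. symmetry. apply Hz. lra.
Qed.

Lemma derivable_pt_lim_continuous (f : R -> R) x l :
  derivable_pt_lim f x l -> continuous f x.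
Proof. intros Hd. apply (ex_derive_continuous f x). exists l. apply is_derive_Reals, Hd. Qed.

Lemma eq_Derive_eq_of_eq_right (f g : R -> R) s b :
  s < b -> ex_derive f s -> ex_derive g s ->
  ex_derive (Derive f) s -> ex_derive (Derive g) s ->
  (forall t, s < t <= b -> f t = g t) -> f s = g s /\ Derive f s = Derive g s.
Proof.
  intros Hsb Hf Hg Hf' Hg' Heq.
  assert (Hzero : forall h : R -> R,
             ex_derive h s -> (forall t, s < t < b -> h t = 0) -> h s = 0).
  { intros h Hh Hz. apply (continuous_eq0_of_eq0_right h s (b - s)); [|lra|].
    - exact (ex_derive_continuous h s Hh).
    - intros t Ht. apply Hz. lra. }
  split.
  - enough (f s - g s = 0) by lra.
    apply (Hzero (fun t => f t - g t)); [apply (ex_derive_minus f g); assumption|].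
    intros t Ht. rewrite Heq; lra.
  - enough (Derive f s - Derive g s = 0) by lra.
    apply (Hzero (fun t => Derive f t - Derive g t));
      [apply (ex_derive_minus (Derive f) (Derive g)); assumption|].
    intros t Ht. rewrite (Derive_ext_loc f g); [ring|].
    apply (locally_interval _ t s b); simpl; try lra.
    intros y Hy1 Hy2. apply Heq. lra.
Qed.

Lemma lipschitz_of_derive_bound (f df : R -> R) a b L :
  (forall c, a <= c <= b -> derivable_pt_lim f c (df c)) ->
  (forall c, a <= c <= b -> Rabs (df c) <= L) ->
  forall x y, a <= x <= b -> a <= y <= b -> Rabs (f x - f y) <= L * Rabs (x - y).
Proof.
  intros Hd Hb x y Hx Hy.
  assert (Hrange : forall c, Rmin y x <= c <= Rmax y x -> a <= c <= b).
  { intros c Hc. assert (a <= Rmin y x) by (apply Rmin_glb; lra).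
    assert (Rmax y x <= b) by (apply Rmax_lub; lra). lra. }
  destruct (MVT_abs f df y x) as [c [Hmvt Hc]].
  { intros c Hc. apply Hd, Hrange, Hc. }
  rewrite Hmvt. apply Rmult_le_compat_r; [apply Rabs_pos | apply Hb, Hrange, Hc].
Qed.

Lemma Rpower_opp_lipschitz q m x y :
  0 < q -> 0 < m -> m <= x -> m <= y ->
  Rabs (Rpower x (- q) - Rpower y (- q)) <= q * Rpower m (- q - 1) * Rabs (x - y).
Proof.
  intros Hq Hm Hx Hy.
  apply (lipschitz_of_derive_bound (fun c => Rpower c (- q)) (fun c => - q * Rpower c (- q - 1))
           m (Rmax x y));
    [| | split; [lra | apply Rmax_l] | split; [lra | apply Rmax_r]].
  - intros c Hc. apply derivable_pt_lim_power. lra.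
  - intros c Hc. rewrite Rabs_mult, Rabs_Ropp, Rabs_pos_eq, Rabs_pos_eq by
      (try apply Rlt_le, Rpower_gt0; lra).
    apply Rmult_le_compat_l; [lra|].
    replace (- q - 1) with (- (q + 1)) by ring. apply Rpower_opp_le; lra.
Qed.

Lemma zero_left_of_second_order_bound (u D D' : R -> R) s d0 K :
  0 < d0 -> 0 <= K ->
  (forall t, s - d0 <= t <= s ->
     derivable_pt_lim u t (D t) /\ derivable_pt_lim D t (D' t) /\
     Rabs (D' t) <= K * (Rabs (u t) + Rabs (D t))) ->
  u s = 0 -> D s = 0 ->
  exists d, 0 < d <= d0 /\ forall t, s - d <= t <= s -> u t = 0.
Proof.
  intros Hd0 HK Hder Hus HDs.
  set (d := Rmin d0 (/ (2 * (1 + K)))).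
  assert (Hd : 0 < d) by (apply Rmin_pos; [lra | apply Rinv_0_lt_compat; lra]).
  assert (Hdd0 : d <= d0) by apply Rmin_l.
  assert (HdK : d * (1 + K) <= / 2).
  { assert (Hd2 : d <= / (2 * (1 + K))) by apply Rmin_r.
    apply (Rmult_le_compat_r (1 + K)) in Hd2; [|lra].
    replace (/ (2 * (1 + K)) * (1 + K)) with (/ 2) in Hd2 by (field; lra). exact Hd2. }
  exists d. split; [lra|].
  set (h := fun t => Rabs (u t) + Rabs (D t)).
  destruct (continuous_ab_maj_consistent h (s - d) s) as [tmax [Hmax Htmax]]; [lra| |].
  { intros c Hc. destruct (Hder c ltac:(lra)) as [Hu [HD _]].
    apply (continuous_plus (fun t => Rabs (u t)) (fun t => Rabs (D t)));
      apply continuous_Rabs_comp; eapply derivable_pt_lim_continuous; eassumption. }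
  set (M := h tmax).
  (* With [M] the maximum of [h] on [s - d, s], the mean value theorem gives
     [h <= d (1 + K) M <= M / 2] there, hence [M = 0]. *)
  assert (Hbound : forall t, s - d <= t <= s -> h t <= d * (1 + K) * M).
  { intros t Ht.
    assert (Hu : Rabs (u t - u s) <= M * Rabs (t - s)).
    { apply (lipschitz_of_derive_bound u D (s - d) s); try lra.
      - intros c Hc. apply Hder. lra.
      - intros c Hc. assert (h c <= M) by (apply Hmax, Hc). unfold h in *.
        assert (0 <= Rabs (u c)) by apply Rabs_pos. lra. }
    assert (HD : Rabs (D t - D s) <= K * M * Rabs (t - s)).
    { apply (lipschitz_of_derive_bound D D' (s - d) s); try lra.
      - intros c Hc. apply Hder. lra.
      - intros c Hc. destruct (Hder c ltac:(lra)) as [_ [_ Hc']].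
        assert (h c <= M) by (apply Hmax, Hc). unfold h in *.
        apply (Rle_trans _ _ _ Hc'). apply Rmult_le_compat_l; lra. }
    rewrite Hus, Rminus_0_r in Hu. rewrite HDs, Rminus_0_r in HD.
    assert (Hts : Rabs (t - s) <= d) by (rewrite Rabs_minus_sym, Rabs_pos_eq; lra).
    assert (HM : 0 <= M).
    { unfold M, h. assert (Q := Rabs_pos (u tmax)). assert (Q' := Rabs_pos (D tmax)). lra. }
    assert (M * Rabs (t - s) <= M * d) by (apply Rmult_le_compat_l; lra).
    assert (K * M * Rabs (t - s) <= K * M * d)
      by (apply Rmult_le_compat_l; [apply Rmult_le_pos|]; lra).
    unfold h. nra. }
  assert (HM0 : M <= 0) by (assert (M <= d * (1 + K) * M) by (apply Hbound; lra); nra).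
  intros t Ht. assert (h t <= M) by (apply Hmax, Ht). unfold h in *.
  assert (Q := Rabs_pos (u t)). assert (Q' := Rabs_pos (D t)).
  apply Rabs_eq_0. lra.
Qed.

Lemma continuation_to_left (P : R -> Prop) a b :
  0 < a < b -> (forall t, a <= t <= b -> P t) ->
  (forall s, 0 < s < b -> (forall t, s < t <= b -> P t) ->
     exists d, 0 < d < s /\ forall t, s - d <= t <= s -> P t) ->
  forall t, 0 < t <= b -> P t.
Proof.
  intros Hab Hinit Hstep.
  (* [- m] is the infimum of the left endpoints [x > 0] of intervals [x, b] on which [P] holds. *)
  set (E := fun y => y < 0 /\ forall t, - y <= t <= b -> P t).
  destruct (completeness E) as [m [Hub Hlub]].
  { exists 0. intros y [Hy _]. lra. }
  { exists (- a). split; [lra|]. intros t Ht. apply Hinit. lra. }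
  assert (Ham : - a <= m) by (apply Hub; split; [lra | intros t Ht; apply Hinit; lra]).
  assert (Hright : forall t, - m < t <= b -> P t).
  { intros t Ht. destruct (classic (exists y, E y /\ - t < y)) as [[y [[_ Hy] Hty]] | Hno].
    - apply Hy. lra.
    - enough (m <= - t) by lra.
      apply Hlub. intros y Hy. apply Rnot_lt_le. intros Hty. apply Hno. exists y. auto. }
  destruct (Rlt_or_le m 0) as [Hm | Hm]; [| intros t Ht; apply Hright; lra].
  destruct (Hstep (- m) ltac:(lra) Hright) as [d [Hd Hleft]].
  assert (Hfurther : E (- (- m - d))).
  { split; [lra|]. intros t Ht.
    destruct (Rle_or_lt t (- m)); [apply Hleft | apply Hright]; lra. }
  apply Hub in Hfurther. lra.
Qed.

Lemma derive_both_signs_of_equal_ends (f df : R -> R) a b c :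
  (forall x, a <= x <= b -> derivable_pt_lim f x (df x)) ->
  f a = f b -> a <= c <= b -> f c <> f a ->
  (exists x, a <= x <= b /\ 0 < df x) /\ (exists y, a <= y <= b /\ df y < 0).
Proof.
  intros Hd Hab Hc Hfc.
  assert (Hac : a < c) by (destruct (Req_dec a c) as [<- |]; [tauto | lra]).
  assert (Hcb : c < b) by (destruct (Req_dec c b) as [-> |]; [congruence | lra]).
  destruct (MVT_cor2 f df a c Hac) as [x [Hx1 Hx2]]; [intros; apply Hd; lra|].
  destruct (MVT_cor2 f df c b Hcb) as [y [Hy1 Hy2]]; [intros; apply Hd; lra|].
  destruct (Rlt_or_le (f a) (f c)).
  - split; [exists x | exists y]; split; try lra; nra.
  - split; [exists y | exists x]; split; try lra; nra.
Qed.

(** * Increasing sequences and sign changes *)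

Lemma insertion_index (t : nat -> R) N x :
  (forall i, (i < N)%nat -> t i < t (S i)) -> (forall i, (i <= N)%nat -> t i <> x) ->
  exists j, (j <= S N)%nat /\ (forall i, (i < j)%nat -> t i < x) /\
            (forall i, (j <= i <= N)%nat -> x < t i).
Proof.
  induction N as [|N IH]; intros Hinc Hne.
  - destruct (Rlt_or_le (t O) x) as [H | H].
    + exists 1%nat. split; [lia|]. split; intros i Hi; [replace i with O by lia; exact H | lia].
    + exists O. split; [lia|]. split; intros i Hi; [lia|]. replace i with O by lia.
      destruct H; [exact H | exfalso; apply (Hne O); auto].
  - destruct IH as [j [Hj [Hlt Hgt]]].
    { intros i Hi. apply Hinc. lia. }
    { intros i Hi. apply Hne. lia. }
    destruct (Nat.eq_dec j (S N)) as [-> | HjN].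
    + destruct (Rlt_or_le (t (S N)) x) as [H | H].
      * exists (S (S N)). split; [lia|]. split; [|intros; lia].
        intros i Hi. destruct (Nat.eq_dec i (S N)) as [-> | ]; [exact H | apply Hlt; lia].
      * exists (S N). split; [lia|]. split; [exact Hlt|].
        intros i Hi. replace i with (S N) by lia.
        destruct H; [exact H | exfalso; apply (Hne (S N)); auto].
    + exists j. split; [lia|]. split; [exact Hlt|].
      intros i Hi. destruct (Nat.eq_dec i (S N)) as [-> | ]; [|apply Hgt; lia].
      apply (Rlt_trans _ (t N)); [apply Hgt; lia | apply Hinc; lia].
Qed.

Lemma increasing_points_of_infinite (P : R -> Prop) :
  (forall l : list R, exists x, P x /\ ~ In x l) ->
  forall N, exists t : nat -> R,
    (forall i, (i <= N)%nat -> P (t i)) /\ (forall i, (i < N)%nat -> t i < t (S i)).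
Proof.
  intros Hnew N. induction N as [|N [t [HP Hinc]]].
  - destruct (Hnew nil) as [x [Hx _]]. exists (fun _ => x). split; [auto | intros; lia].
  - destruct (Hnew (map t (seq 0 (S N)))) as [x [Hx Hnotin]].
    destruct (insertion_index t N x Hinc) as [j [Hj [Hlt Hgt]]].
    { intros i Hi Heq. apply Hnotin. rewrite <- Heq. apply in_map, in_seq. lia. }
    exists (fun i => if (i <? j)%nat then t i else if (i =? j)%nat then x else t (i - 1)%nat).
    split.
    + intros i Hi.
      destruct (Nat.ltb_spec i j); [apply HP; lia|].
      destruct (Nat.eqb_spec i j); [exact Hx | apply HP; lia].
    + intros i Hi.
      destruct (Nat.ltb_spec i j), (Nat.ltb_spec (S i) j), (Nat.eqb_spec i j),
        (Nat.eqb_spec (S i) j); try lia.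
      * apply Hinc. lia.
      * apply Hlt. lia.
      * replace (S i - 1)%nat with i by lia. subst. apply Hgt. lia.
      * replace (S i - 1)%nat with (S (i - 1)) by lia. apply Hinc. lia.
Qed.

Lemma sign_changes_of_both_signs (f : R -> R) (t : nat -> R) k :
  0 < t O ->
  (forall i, (i <= k)%nat ->
     (exists x, t i <= x <= t (S i) /\ 0 < f x) /\ (exists y, t i <= y <= t (S i) /\ f y < 0)) ->
  exists s : nat -> R, 0 < s O /\
    forall i, (i < k)%nat -> s i < s (S i) /\ f (s i) * f (s (S i)) < 0.
Proof.
  intros Ht0 Hsigns.
  assert (Hpick : forall i, exists x, (i <= k)%nat ->
            t i <= x <= t (S i) /\ (if Nat.even i then 0 < f x else f x < 0)).
  { intros i. destruct (Compare_dec.le_lt_dec i k) as [Hi | Hi]; [| exists 0; lia].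
    destruct (Hsigns i Hi) as [[x Hx] [y Hy]].
    destruct (Nat.even i); [exists x | exists y]; auto. }
  destruct (functional_choice _ Hpick) as [s Hs].
  exists s. split.
  - destruct (Hs O ltac:(lia)) as [Hs0 _]. lra.
  - intros i Hi.
    destruct (Hs i ltac:(lia)) as [Hsi Hfi], (Hs (S i) ltac:(lia)) as [Hsi' Hfi'].
    rewrite Nat.even_succ, <- Nat.negb_even in Hfi'.
    assert (Hprod : f (s i) * f (s (S i)) < 0) by (destruct (Nat.even i); simpl in Hfi'; nra).
    split; [|exact Hprod].
    destruct (Req_dec (s i) (s (S i))) as [Heq | Hne]; [rewrite Heq in Hprod; nra | lra].
Qed.

(** * The MEMS equation *)

Definition solves_mems_ode (alpha p : R) (n : nat) (v : R -> R) (t : R) : Prop :=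
  ex_derive v t /\ ex_derive (Derive v) t /\
  Derive (Derive v) t + (INR n - 1) / t * Derive v t = Rpower t alpha / Rpower (v t) p.

Section MEMS.

Variables (alpha p : R) (n : nat).
Hypothesis alpha_ge0 : 0 <= alpha.
Hypothesis p_gt1 : 1 < p.
Hypothesis n_ge1 : (1 <= n)%nat.
Hypothesis B_pos : 0 < beta_of alpha p * (beta_of alpha p + INR n - 2).

Local Notation beta := (beta_of alpha p).
Local Notation B := (beta_of alpha p * (beta_of alpha p + INR n - 2)).
Local Notation c0 := (c0_of alpha p n).
Local Notation w0 := (w0_of alpha p n).

Lemma mems_ode_difference_bound (v1 v2 : R -> R) s m t :
  0 < s -> 0 < m -> s / 2 <= t <= s -> m <= v1 t -> m <= v2 t ->
  solves_mems_ode alpha p n v1 t -> solves_mems_ode alpha p n v2 t ->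
  Rabs (Derive (Derive v1) t - Derive (Derive v2) t) <=
  ((INR n - 1) * (2 / s) + Rpower s alpha * (p * Rpower m (- p - 1))) *
  (Rabs (v1 t - v2 t) + Rabs (Derive v1 t - Derive v2 t)).
Proof.
  intros Hs Hm Ht Hv1 Hv2 [_ [_ Hode1]] [_ [_ Hode2]].
  set (A := (INR n - 1) * (2 / s)).
  set (L := Rpower s alpha * (p * Rpower m (- p - 1))).
  assert (Hn : 1 <= INR n) by (apply (le_INR 1); exact n_ge1).
  assert (HA : 0 <= A) by (apply Rmult_le_pos; [lra | apply Rlt_le, Rdiv_lt_0_compat; lra]).
  assert (HL : 0 <= L)
    by (apply Rmult_le_pos; [|apply Rmult_le_pos]; try apply Rlt_le, Rpower_gt0; lra).
  assert (Hdamp : Rabs ((INR n - 1) / t) <= A).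
  { rewrite Rabs_pos_eq by (apply Rdiv_le_0_compat; lra).
    unfold A, Rdiv. apply Rmult_le_compat_l; [lra|].
    replace (2 * / s) with (/ (s / 2)) by (field; lra). apply Rinv_le_contravar; lra. }
  assert (Hforce : Rabs (Rpower t alpha / Rpower (v1 t) p - Rpower t alpha / Rpower (v2 t) p)
                   <= L * Rabs (v1 t - v2 t)).
  { unfold Rdiv. rewrite <- Rmult_minus_distr_l, Rabs_mult, <- !Rpower_Ropp.
    rewrite (Rabs_pos_eq (Rpower t alpha)) by apply Rlt_le, Rpower_gt0.
    unfold L. rewrite Rmult_assoc. apply Rmult_le_compat.
    - apply Rlt_le, Rpower_gt0.
    - apply Rabs_pos.
    - apply Rle_Rpower_l; lra.
    - apply Rpower_opp_lipschitz; lra. }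
  replace (Derive (Derive v1) t - Derive (Derive v2) t) with
    (- ((INR n - 1) / t) * (Derive v1 t - Derive v2 t) +
     (Rpower t alpha / Rpower (v1 t) p - Rpower t alpha / Rpower (v2 t) p)) by lra.
  eapply Rle_trans; [apply Rabs_triang|].
  rewrite Rabs_mult, Rabs_Ropp.
  assert (Rabs ((INR n - 1) / t) * Rabs (Derive v1 t - Derive v2 t)
          <= A * Rabs (Derive v1 t - Derive v2 t))
    by (apply Rmult_le_compat_r; [apply Rabs_pos | exact Hdamp]).
  assert (Q1 := Rabs_pos (v1 t - v2 t)). assert (Q2 := Rabs_pos (Derive v1 t - Derive v2 t)).
  fold A L. nra.
Qed.

Lemma mems_ode_backward_unique (v1 v2 : R -> R) s :
  (forall t, 0 < t -> solves_mems_ode alpha p n v1 t /\ 0 < v1 t) ->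
  (forall t, 0 < t -> solves_mems_ode alpha p n v2 t /\ 0 < v2 t) ->
  0 < s -> v1 s = v2 s -> Derive v1 s = Derive v2 s ->
  exists d, 0 < d < s /\ forall t, s - d <= t <= s -> v1 t = v2 t.
Proof.
  intros Hv1 Hv2 Hs Heq HDeq.
  assert (Hmin : forall v : R -> R,
             (forall t, 0 < t -> solves_mems_ode alpha p n v t /\ 0 < v t) ->
             exists m, 0 < m /\ forall t, s / 2 <= t <= s -> m <= v t).
  { intros v Hv.
    destruct (continuous_ab_min_consistent v (s / 2) s) as [tmin [Hmin Htmin]]; [lra| |].
    - intros c Hc. apply (ex_derive_continuous v c), Hv. lra.
    - exists (v tmin). split; [apply Hv; lra | exact Hmin]. }
  destruct (Hmin v1 Hv1) as [m1 [Hm1 Hle1]], (Hmin v2 Hv2) as [m2 [Hm2 Hle2]].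
  set (m := Rmin m1 m2).
  assert (Hm : 0 < m) by (apply Rmin_pos; assumption).
  destruct (zero_left_of_second_order_bound (fun t => v1 t - v2 t)
              (fun t => Derive v1 t - Derive v2 t)
              (fun t => Derive (Derive v1) t - Derive (Derive v2) t) s (s / 2)
              ((INR n - 1) * (2 / s) + Rpower s alpha * (p * Rpower m (- p - 1))))
    as [d [Hd Hzero]]; [lra | | | lra | lra |].
  - assert (1 <= INR n) by (apply (le_INR 1); exact n_ge1).
    assert (0 < 2 / s) by (apply Rdiv_lt_0_compat; lra).
    assert (0 < Rpower s alpha) by apply Rpower_gt0.
    assert (0 < Rpower m (- p - 1)) by apply Rpower_gt0.
    assert (0 < p * Rpower m (- p - 1)) by (apply Rmult_lt_0_compat; lra).
    nra.
  - intros t Ht.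
    destruct (Hv1 t ltac:(lra)) as [[Hd1 [Hdd1 _]] _], (Hv2 t ltac:(lra)) as [[Hd2 [Hdd2 _]] _].
    split; [|split].
    + apply is_derive_Reals.
      exact (is_derive_minus _ _ _ _ _ (Derive_correct _ _ Hd1) (Derive_correct _ _ Hd2)).
    + apply is_derive_Reals.
      exact (is_derive_minus _ _ _ _ _ (Derive_correct _ _ Hdd1) (Derive_correct _ _ Hdd2)).
    + apply mems_ode_difference_bound; try lra; try apply Hv1; try apply Hv2; try lra.
      * apply (Rle_trans _ m1); [apply Rmin_l | apply Hle1; lra].
      * apply (Rle_trans _ m2); [apply Rmin_r | apply Hle2; lra].
  - exists d. split; [lra|]. intros t Ht. apply Rminus_diag_uniq, Hzero, Ht.
Qed.

Lemma beta_pos : 0 < beta.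
Proof. apply Rdiv_lt_0_compat; lra. Qed.

Lemma Rpower_c0 : Rpower c0 (p + 1) = / B.
Proof.
  unfold c0_of. rewrite Rpower_mult.
  replace (- (1 / (p + 1)) * (p + 1)) with (Ropp 1) by (field; lra).
  rewrite Rpower_Ropp, Rpower_1 by exact B_pos. reflexivity.
Qed.

Lemma w0_pos t : 0 < w0 t.
Proof. apply Rmult_lt_0_compat; apply Rpower_gt0. Qed.

Lemma Rpower_w0 t : 0 < t -> Rpower (w0 t) (p + 1) = Rpower t (alpha + 2) / B.
Proof.
  intros Ht. unfold w0_of.
  rewrite <- Rpower_mult_distr, Rpower_mult, Rpower_c0 by apply Rpower_gt0.
  replace (beta * (p + 1)) with (alpha + 2) by (unfold beta_of; field; lra).
  unfold Rdiv. ring.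
Qed.

Lemma w0_is_derive t : 0 < t -> is_derive w0 t (c0 * (beta * Rpower t (beta - 1))).
Proof.
  intros Ht. apply is_derive_scal, is_derive_Reals, derivable_pt_lim_power, Ht.
Qed.

Lemma Derive_w0_is_derive t :
  0 < t -> is_derive (Derive w0) t (c0 * (beta * ((beta - 1) * Rpower t (beta - 1 - 1)))).
Proof.
  intros Ht.
  apply (is_derive_ext_loc (fun y => c0 * (beta * Rpower y (beta - 1)))).
  - apply (locally_interval _ t 0 p_infty); simpl; try lra.
    intros y Hy _. symmetry. apply is_derive_unique, w0_is_derive, Hy.
  - apply is_derive_scal, is_derive_scal, is_derive_Reals, derivable_pt_lim_power, Ht.
Qed.

Lemma w0_solves_mems_ode t : 0 < t -> solves_mems_ode alpha p n w0 t.
Proof.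
  intros Ht.
  split; [|split]; [eexists; apply w0_is_derive, Ht | eexists; apply Derive_w0_is_derive, Ht |].
  rewrite (is_derive_unique _ _ _ (Derive_w0_is_derive t Ht)),
    (is_derive_unique _ _ _ (w0_is_derive t Ht)).
  assert (Hpow1 : Rpower t (beta - 1) = Rpower t (beta - 1 - 1) * t).
  { rewrite <- (Rpower_1 t) at 3 by exact Ht. rewrite <- Rpower_plus. f_equal. ring. }
  assert (Hpowa : Rpower t alpha = Rpower t (beta - 1 - 1) * Rpower t (beta * p)).
  { rewrite <- Rpower_plus. f_equal. unfold beta_of. field. lra. }
  assert (Hw0p : Rpower (w0 t) p = Rpower c0 p * Rpower t (beta * p)).
  { unfold w0_of. rewrite <- Rpower_mult_distr, Rpower_mult by apply Rpower_gt0. reflexivity. }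
  assert (HC : 0 < Rpower c0 p) by apply Rpower_gt0.
  assert (HcB : c0 * B = / Rpower c0 p).
  { apply (Rmult_eq_reg_l (Rpower c0 p)); [|lra].
    rewrite Rinv_r by lra.
    replace (Rpower c0 p * (c0 * B)) with (Rpower c0 (p + 1) * B)
      by (rewrite Rpower_plus, Rpower_1 by apply Rpower_gt0; ring).
    rewrite Rpower_c0. apply Rinv_l, Rgt_not_eq, B_pos. }
  rewrite Hpow1, Hpowa, Hw0p.
  transitivity (c0 * B * Rpower t (beta - 1 - 1)); [field; lra|].
  rewrite HcB. field. split; apply Rgt_not_eq, Rpower_gt0.
Qed.

Lemma lambda_eq_B_iff (w : R -> R) t :
  0 < t -> 0 < w t -> lambda_of alpha p w t = B <-> w t = w0 t.
Proof.
  intros Ht Hw. unfold lambda_of.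
  assert (Hw0 := Rpower_w0 t Ht). set (b := B) in *.
  assert (Hta := Rpower_gt0 t (alpha + 2)). assert (Hwp := Rpower_gt0 (w t) (p + 1)).
  split.
  - intros Hl. apply (Rpower_base_inj _ _ (p + 1)); [exact Hw | apply w0_pos | lra |].
    rewrite Hw0, <- Hl. field. lra.
  - intros Hwt. rewrite Hwt, Hw0. field. lra.
Qed.

Lemma ex_derive_lambda (w : R -> R) t :
  0 < t -> 0 < w t -> ex_derive w t -> ex_derive (lambda_of alpha p w) t.
Proof.
  intros Ht Hw Hd. unfold lambda_of.
  apply ex_derive_div; [| | apply Rgt_not_eq, Rpower_gt0].
  - eexists. apply is_derive_Reals, derivable_pt_lim_power, Ht.
  - apply (ex_derive_comp (fun x => Rpower x (p + 1)) w); [|exact Hd].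
    eexists. apply is_derive_Reals, derivable_pt_lim_power, Hw.
Qed.

Variable w : R -> R.
Hypothesis w_sol : is_mems_solution alpha p n w.

Lemma w_solves_mems_ode t : 0 < t -> solves_mems_ode alpha p n w t /\ 0 < w t.
Proof.
  intros Ht. destruct w_sol as [_ [_ [Hpos Hode]]].
  split; [apply Hode, Ht | apply Hpos; lra].
Qed.

Lemma filterlim_w_at_right_0 : filterlim w (at_right 0) (locally 1).
Proof.
  destruct w_sol as [Hw0 [Hslope _]]. rewrite <- Hw0.
  apply (filterlim_at_right_of_slope w 0 0).
  apply (filterlim_ext (fun h => (w h - w 0) / h)); [|exact Hslope].
  intros h. rewrite Rminus_0_r. reflexivity.
Qed.

Lemma filterlim_w0_at_right_0 : filterlim w0 (at_right 0) (locally 0).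
Proof.
  enough (H : filterlim w0 (at_right 0) (locally (c0 * 0))) by (rewrite Rmult_0_r in H; exact H).
  apply (filterlim_comp _ _ _ (fun h => Rpower h beta) (Rmult c0) _ (locally 0)).
  - apply filterlim_Rpower_at_right_0, beta_pos.
  - apply (continuity_pt_filterlim (Rmult c0)). reg.
Qed.

Lemma w_ne_w0_on_interval a b : 0 < a < b -> ~ (forall t, a <= t <= b -> w t = w0 t).
Proof.
  intros Hab Hagree.
  assert (Hw0sol : forall t, 0 < t -> solves_mems_ode alpha p n w0 t /\ 0 < w0 t)
    by (intros t Ht; split; [apply w0_solves_mems_ode, Ht | apply w0_pos]).
  assert (Hall : forall t, 0 < t <= b -> w t = w0 t).
  { apply (continuation_to_left _ a b Hab Hagree). intros s Hs Hright.
    destruct (w_solves_mems_ode s ltac:(lra)) as [[Hd1 [Hdd1 _]] _].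
    destruct (Hw0sol s ltac:(lra)) as [[Hd2 [Hdd2 _]] _].
    destruct (eq_Derive_eq_of_eq_right w w0 s b) as [Heq HDeq]; auto; try lra.
    apply (mems_ode_backward_unique w w0 s w_solves_mems_ode Hw0sol); lra. }
  assert (Hlim : filterlim w0 (at_right 0) (locally 1)).
  { apply (filterlim_ext_loc w); [|exact filterlim_w_at_right_0].
    apply (locally_interval _ 0 m_infty b); simpl; try lra.
    intros y _ Hy Hy0. apply Hall. lra. }
  assert (H10 : 1 = 0) by exact (filterlim_locally_unique _ _ _ Hlim filterlim_w0_at_right_0).
  lra.
Qed.

Lemma lambda_derive_both_signs a b :
  0 < a < b -> w a = w0 a -> w b = w0 b ->
  (exists x, a <= x <= b /\ 0 < Derive (lambda_of alpha p w) x) /\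
  (exists y, a <= y <= b /\ Derive (lambda_of alpha p w) y < 0).
Proof.
  intros Hab Ha Hb.
  destruct (not_all_ex_not _ _ (w_ne_w0_on_interval a b Hab)) as [c Hc].
  apply imply_to_and in Hc. destruct Hc as [Hc Hwc].
  assert (HlamB : forall t, a <= t <= b -> w t = w0 t -> lambda_of alpha p w t = B)
    by (intros t Ht Hwt; apply lambda_eq_B_iff; [lra | apply w_solves_mems_ode; lra | exact Hwt]).
  apply (derive_both_signs_of_equal_ends (lambda_of alpha p w) _ a b c); [| | exact Hc |].
  - intros x Hx. apply is_derive_Reals, Derive_correct, ex_derive_lambda; [lra | |];
      apply w_solves_mems_ode; lra.
  - rewrite !HlamB by (auto; lra). reflexivity.
  - rewrite (HlamB a) by (auto; lra). intros Hlam. apply Hwc.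
    apply lambda_eq_B_iff; [lra | apply w_solves_mems_ode; lra | exact Hlam].
Qed.

End MEMS.

Theorem lemma4p1 (alpha p : R) (n : nat) (w : R -> R) :
  0 <= alpha -> 1 < p -> (1 <= n)%nat ->
  beta_of alpha p * (beta_of alpha p + INR n - 2) > 0 ->
  is_mems_solution alpha p n w ->
  intersect_infinitely w (w0_of alpha p n) ->
  changes_sign_infinitely (Derive (lambda_of alpha p w)).
Proof.
  intros Ha Hp Hn HB Hw Hinf k.
  assert (Hnew : forall l : list R, exists x, (0 < x /\ w x = w0_of alpha p n x) /\ ~ In x l).
  { intros l. apply NNPP. intros Hno. apply Hinf. exists l. intros x Hx Hwx.
    apply NNPP. intros Hnotin. apply Hno. exists x. auto. }
  destruct (increasing_points_of_infinite _ Hnew (S k)) as [t [Ht Hinc]].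
  apply (sign_changes_of_both_signs _ t k); [apply Ht; lia|].
  intros i Hi.
  destruct (Ht i ltac:(lia)) as [Hti Hwi], (Ht (S i) ltac:(lia)) as [_ Hwi'].
  apply (lambda_derive_both_signs alpha p n); auto.
  split; [exact Hti | apply Hinc; lia].
Qed.
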